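(* Let $c>1$, let $m=m_1\cdots m_c\in S_c$, and let $K$ be the set partition of $S_c$ whose only part with more than one element is the set of cyclic shifts $\{m_am_{a+1}\cdots m_cm_1\cdots m_{a-1}:1\le a\le c\}$. Then for every $j\in\{1,2,\ldots,c\}$, in the $K$-equivalence on $S_{c+1}$ we have $j\rightharpoonup m\equiv m\leftharpoonup(j+1)$ and $m\leftharpoonup j\equiv (j+1)\rightharpoonup m$.
   Context: Permutations are written in one-line notation as words. For a word $w$ and a positive integer $i$, $i\rightharpoonup w$ denotes the word obtained by increasing by $1$ each letter of $w$ that is $\ge i$ and then prepending $i$; $w\leftharpoonup i$ is obtained by increasing by $1$ each letter of $w$ that is $\ge i$ and then appending $i$ at the right end. The order permutation (standardization) of a word $u$ of distinct positive integers of length $\ell$ is the unique $\pi\in S_\ell$ with $\pi_i<\pi_j$ iff $u_i<u_j$. The $K$-equivalence on $S_n$ is generated by declaring $\phi\equiv\psi$ whenever $\phi=aub$, $\psi=avb$ for words $a,b,u,v$ with $u,v$ of length $c$ whose order permutations lie in the same part of $K$. *)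

(* permutations as words (seq nat) in one-line notation. *)
From Stdlib Require Import Relations.
From mathcomp Require Import all_boot.
Set Implicit Arguments. Unset Strict Implicit. Unset Printing Implicit Defensive.

Definition inS (n : nat) (w : seq nat) : bool := perm_eq w (iota 1 n).

Definition shiftge (i : nat) (w : seq nat) : seq nat :=
  map (fun x => if i <= x then x.+1 else x) w.

Definition lharp (i : nat) (w : seq nat) : seq nat := i :: shiftge i w.
Definition rharp (w : seq nat) (i : nat) : seq nat := rcons (shiftge i w) i.

Definition stdz (u : seq nat) : seq nat :=
  map (fun x => (count (fun y => y < x) u).+1) u.

Definition cyc_shifts (m : seq nat) : seq (seq nat) :=
  [seq rot a m | a <- iota 0 (size m)].

Definition sameK (m p q : seq nat) : bool :=
  (p == q) || ((p \in cyc_shifts m) && (q \in cyc_shifts m)).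

Definition kstep (c : nat) (m : seq nat) (n : nat) (phi psi : seq nat) : Prop :=
  inS n phi /\ inS n psi /\
  exists a b u v : seq nat,
    [/\ phi = a ++ u ++ b, psi = a ++ v ++ b, size u = c, size v = c
      & sameK m (stdz u) (stdz v)].

Definition Keq (c : nat) (m : seq nat) (n : nat) : relation (seq nat) :=
  clos_refl_sym_trans (seq nat) (kstep c m n).

(** Write [m = A0 j B0], so that [j ⇀ m = j A (j+1) B] and [m ↼ (j+1) = A j B (j+1)],
    where [A], [B] are [A0], [B0] with every letter [>= j] raised by one.  The factor
    [A (j+1) B] standardizes to [m], so it may be rotated into [B A (j+1)].  Since
    neither [j] nor [j+1] occurs in [A B], the factor [j B A] has the same
    standardization as [(j+1) B A], a cyclic shift of [m], and rotating it into
    [A j B] reaches [m ↼ (j+1)].  The second equivalence is obtained the same way,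
    rotating first the prefix and then the suffix of [m ↼ j = A (j+1) B j]. *)
From Stdlib Require Import Relations.
From mathcomp Require Import all_boot.
From mathcomp Require Import zify.
Set Implicit Arguments. Unset Strict Implicit.

Lemma count_lt_iota x a n : count (fun y => y < x) (iota a n) = minn (x - a) n.
Proof.
elim: n a => [|n IHn] a /=; first lia.
by rewrite IHn; case: (ltnP a x) => /= Hax; lia.
Qed.

Lemma stdz_inS c m : inS c m -> stdz m = m.
Proof.
move=> Hm; rewrite /stdz -[RHS]map_id; apply/eq_in_map => x xm.
move: xm; rewrite (perm_mem Hm) mem_iota (permP Hm) count_lt_iota; lia.
Qed.

Lemma stdz_map_in (f : nat -> nat) s :
  {in s &, forall x y, (f x < f y) = (x < y)} -> stdz (map f s) = stdz s.
Proof.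
move=> f_mono; rewrite /stdz -map_comp; apply/eq_in_map => x xs /=.
by rewrite count_map; congr S; apply: eq_in_count => y ys /=; apply: f_mono.
Qed.

Lemma stdz_rot k u : stdz (rot k u) = rot k (stdz u).
Proof.
rewrite /stdz map_rot; congr rot; apply: eq_map => x.
by have /permP-> : perm_eq (rot k u) u by rewrite perm_rot.
Qed.

Lemma stdz_shiftge j s : stdz (shiftge j s) = stdz s.
Proof. by apply: stdz_map_in => x y _ _; case: (leqP j x); case: (leqP j y); lia. Qed.

Lemma stdz_cat_succ j x y : j \notin x ++ y -> j.+1 \notin x ++ y ->
  stdz (x ++ j :: y) = stdz (x ++ j.+1 :: y).
Proof.
move=> jxy j1xy; pose f z := if z == j then j.+1 else z.
have f_id s : j \notin s -> map f s = s.
  move=> js; rewrite -[RHS]map_id; apply/eq_in_map => z zs; rewrite /f.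
  by case: eqP => // Ez; rewrite -Ez zs in js.
have -> : x ++ j.+1 :: y = map f (x ++ j :: y).
  move: jxy; rewrite mem_cat negb_or => /andP [jx jy].
  by rewrite map_cat /= f_id // f_id // /f eqxx.
apply/esym/stdz_map_in => z t zs ts.
have not_succ w : w \in x ++ j :: y -> w != j.+1.
  by apply: contraTneq => ->; rewrite mem_cat inE (gtn_eqF (ltnSn j)) /= -mem_cat.
rewrite /f; move: (not_succ z zs) (not_succ t ts).
by case: (z =P j) => [->|zj]; case: (t =P j) => [->|tj] zj1 tj1; apply/idP/idP; lia.
Qed.

Lemma cyc_shiftsP m p :
  reflect (exists2 a, a < size m & p = rot a m) (p \in cyc_shifts m).
Proof.
apply: (iffP mapP) => [[a]|[a Ha ->]]; last by exists a; rewrite ?mem_iota.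
by rewrite mem_iota => /andP [_ Ha] ->; exists a.
Qed.

Lemma rot_cyc_shifts m k p : p \in cyc_shifts m -> rot k p \in cyc_shifts m.
Proof.
case/cyc_shiftsP=> a Ha ->; have [Hk|Hk] := leqP (size m) k.
  by rewrite rot_oversize ?size_rot //; apply/cyc_shiftsP; exists a.
rewrite rot_add_mod ?(ltnW Hk) ?(ltnW Ha) //; apply/cyc_shiftsP.
case: leqP => Hka; last by exists (k + a - size m) => //; lia.
have [->|Hlt] := eqVneq (k + a) (size m).
  by rewrite rot_size; exists 0; rewrite ?rot0 //; lia.
by exists (k + a); rewrite // ltn_neqAle Hlt.
Qed.

Lemma inS_rot_factor n a u b k : inS n (a ++ u ++ b) -> inS n (a ++ rot k u ++ b).
Proof. by apply: perm_trans; rewrite perm_cat2l perm_cat2r perm_rot. Qed.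

(* The pattern of a rotated factor is the rotated pattern, again a cyclic shift. *)
Lemma Keq_rot_factor c m n a u b k :
  inS n (a ++ u ++ b) -> size u = c -> stdz u \in cyc_shifts m ->
  Keq c m n (a ++ u ++ b) (a ++ rot k u ++ b).
Proof.
move=> Hin Hu Hcyc; apply: rst_step; split=> //; split; first exact: inS_rot_factor.
exists a, b, u, (rot k u); split=> //; first by rewrite size_rot.
by rewrite /sameK Hcyc stdz_rot rot_cyc_shifts ?orbT.
Qed.

Lemma inS_lharp c m j : inS c m -> 1 <= j <= c.+1 -> inS c.+1 (lharp j m).
Proof.
move=> Hm Hj; have um : uniq m by rewrite (perm_uniq Hm) iota_uniq.
have shift_inj : injective (fun x => if j <= x then x.+1 else x).
  by move=> x y /=; case: (leqP j x); case: (leqP j y); lia.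
have uniq_lharp : uniq (lharp j m).
  rewrite /= (map_inj_uniq shift_inj) um andbT.
  by apply/mapP => [[x _]]; case: (leqP j x); lia.
have sub : {subset lharp j m <= iota 1 c.+1}.
  move=> y; rewrite inE mem_iota => /orP [/eqP ->|/mapP [x xm ->]]; first lia.
  by move: xm; rewrite (perm_mem Hm) mem_iota; case: (leqP j x); lia.
have size_le : size (iota 1 c.+1) <= size (lharp j m).
  by rewrite size_iota /= size_map (perm_size Hm) size_iota.
have [_ Heq] := uniq_min_size uniq_lharp sub size_le.
by apply: uniq_perm; rewrite ?iota_uniq.
Qed.

Lemma notin_uniq_cat_cons (T : eqType) (x : T) a b :
  uniq (a ++ x :: b) -> x \notin a ++ b.
Proof. by rewrite -cat1s uniq_catCA => /andP []. Qed.

Lemma shiftge_split j a b : j \notin a ++ b ->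
  shiftge j (a ++ j :: b) = shiftge j a ++ j.+1 :: shiftge j b /\
  shiftge j.+1 (a ++ j :: b) = shiftge j a ++ j :: shiftge j b.
Proof.
move=> jab; rewrite /shiftge !map_cat /= leqnn ltnn; split=> //.
congr (_ ++ _ :: _); apply/eq_in_map => x xab;
  have : x != j by apply: contraNneq jab => <-; rewrite mem_cat xab ?orbT.
all: by case: (leqP j.+1 x); case: (leqP j x); lia.
Qed.

Section RotatingPatterns.

Variables (c : nat) (m : seq nat) (j : nat) (A B : seq nat).
Hypothesis size_pattern : size (A ++ j.+1 :: B) = c.
Hypothesis pattern_cyc : stdz (A ++ j.+1 :: B) \in cyc_shifts m.
Hypothesis inS_start : inS c.+1 (j :: A ++ j.+1 :: B).

Let uniq_start : uniq (j :: A ++ j.+1 :: B).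
Proof. by rewrite (perm_uniq inS_start) iota_uniq. Qed.

Let j_notin : j \notin B ++ A.
Proof.
case/andP: uniq_start => j_notin_start _; apply: contra j_notin_start.
by rewrite !mem_cat inE => /orP [] ->; rewrite ?orbT.
Qed.

Let succ_notin : j.+1 \notin B ++ A.
Proof.
case/andP: uniq_start => _ /notin_uniq_cat_cons.
by rewrite !mem_cat orbC.
Qed.

Let rot_pattern_A : rot (size A) (A ++ j.+1 :: B) = j.+1 :: B ++ A.
Proof. exact: rot_size_cat. Qed.

Let rot_pattern_A1 : rot (size A).+1 (A ++ j.+1 :: B) = B ++ A ++ [:: j.+1].
Proof. by rewrite -cat_rcons -(size_rcons A j.+1) rot_size_cat cats1. Qed.

Lemma Keq_lharp_rharp_factor :
  Keq c m c.+1 (j :: A ++ j.+1 :: B) (A ++ j :: B ++ [:: j.+1]).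
Proof.
have start : inS c.+1 ([:: j] ++ (A ++ j.+1 :: B) ++ [::]) by rewrite cats0.
have first_move := Keq_rot_factor (size A).+1 start size_pattern pattern_cyc.
have inS_mid := inS_rot_factor (size A).+1 start.
rewrite rot_pattern_A1 !cats0 in first_move inS_mid.
apply: rst_trans first_move _.
have -> : [:: j] ++ B ++ A ++ [:: j.+1] = [::] ++ (j :: B ++ A) ++ [:: j.+1].
  by rewrite /= catA.
have -> : A ++ j :: B ++ [:: j.+1] = [::] ++ rot (size B).+1 (j :: B ++ A) ++ [:: j.+1].
  by rewrite (rot_size_cat (j :: B)) /= -catA.
apply: Keq_rot_factor; first by rewrite /= -catA.
  by rewrite -size_pattern /= !size_cat /=; lia.
rewrite (@stdz_cat_succ j [::] (B ++ A)) //= -rot_pattern_A stdz_rot.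
exact: rot_cyc_shifts.
Qed.

Lemma Keq_rharp_lharp_factor :
  Keq c m c.+1 (A ++ j.+1 :: B ++ [:: j]) (j.+1 :: A ++ j :: B).
Proof.
have start : inS c.+1 ([::] ++ (A ++ j.+1 :: B) ++ [:: j]).
  by rewrite cats1 -rot1_cons /inS perm_rot.
have first_move := Keq_rot_factor (size A) start size_pattern pattern_cyc.
have inS_mid := inS_rot_factor (size A) start.
rewrite rot_pattern_A in first_move inS_mid.
have -> : A ++ j.+1 :: B ++ [:: j] = [::] ++ (A ++ j.+1 :: B) ++ [:: j] by rewrite -catA.
apply: rst_trans first_move _.
have -> : [::] ++ (j.+1 :: B ++ A) ++ [:: j] = [:: j.+1] ++ (B ++ A ++ [:: j]) ++ [::].
  by rewrite cats0 /= -catA.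
have -> : j.+1 :: A ++ j :: B = [:: j.+1] ++ rot (size B) (B ++ A ++ [:: j]) ++ [::].
  by rewrite rot_size_cat cats0 -catA.
apply: Keq_rot_factor; first by rewrite cats0 /= catA.
  by rewrite -size_pattern !size_cat /=; lia.
rewrite catA (@stdz_cat_succ j (B ++ A) [::]) ?cats0 // -catA -rot_pattern_A1 stdz_rot.
exact: rot_cyc_shifts.
Qed.

End RotatingPatterns.

Theorem lemma2p4 (c : nat) (m : seq nat) :
  1 < c -> inS c m ->
  forall j : nat, 1 <= j <= c ->
    Keq c m c.+1 (lharp j m) (rharp m j.+1) /\
    Keq c m c.+1 (rharp m j) (lharp j.+1 m).
Proof.
move=> c_gt1 Hm j Hj; have inS_lharp_j : inS c.+1 (lharp j m) by apply: inS_lharp; lia.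
have size_m : size m = c by rewrite (perm_size Hm) size_iota.
have m_cyc : stdz (shiftge j m) \in cyc_shifts m.
  by rewrite stdz_shiftge (stdz_inS Hm); apply/cyc_shiftsP; exists 0; rewrite ?rot0 //; lia.
have jm : j \in m by rewrite (perm_mem Hm) mem_iota; lia.
move: size_m m_cyc inS_lharp_j (perm_uniq Hm); rewrite iota_uniq /lharp /rharp.
case/splitPr: jm => A0 B0 size_m m_cyc inS_lharp_j /notin_uniq_cat_cons jAB.
have [shift_j shift_j1] := shiftge_split jAB.
rewrite shift_j in m_cyc inS_lharp_j *; rewrite shift_j1 -!cats1 -!catA /=.
split; [apply: Keq_lharp_rharp_factor | apply: Keq_rharp_lharp_factor] => //.
all: by rewrite -shift_j size_map.
Qed.
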